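(* Let $(X,\le)$ be a non-empty well-ordered set with least element $x_0$, let $G$ be the free nilpotent group of class two on $X$, and take $A=G$, $K=[G,G]=Z(G)$. For each $y\in X$ let $\psi_y$ be the endomorphism of the abelian group $G/K$ with $\psi_y(x_0K)=yK$ and $\psi_y(xK)=K$ for $x\in X\setminus\{x_0\}$, and let $g\circ_{y}h=g\cdot\psi_y^\uparrow(g)\cdot h\cdot\psi_y^\uparrow(g)^{-1}$ for a lifting $\psi_y^\uparrow:G\to G$ of $\psi_y$ (i.e. $\psi_y^\uparrow(g)K=\psi_y(gK)$). Then $(\circ_y:y\in X)$ is a brace block on $G$, $x_0\circ_y x_0=x_0\cdot y\cdot x_0\cdot y^{-1}$, and the operations $\circ_y$, $y\in X$, are pairwise distinct; hence the brace block consists of $|X|$ distinct operations.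
   Context: A skew brace is a triple $(G,\cdot,\circ)$ where $(G,\cdot)$ and $(G,\circ)$ are groups and $g\circ(h\cdot k)=(g\circ h)\cdot g^{-1}\cdot(g\circ k)$ for all $g,h,k$. A bi-skew brace is a triple $(G,\cdot,\circ)$ such that both $(G,\cdot,\circ)$ and $(G,\circ,\cdot)$ are skew braces. A brace block on a set $G$ is a family of group operations on $G$ any two of which form a bi-skew brace. The operation $\circ_y$ does not depend on the choice of lifting since $K$ is central. *)

(* groups are given as a carrier type with explicit operations
   and axioms, since the groups here are infinite. *)
Set Implicit Arguments.

Section Defs.
Context {T : Type}.

Definition group_laws (mul : T -> T -> T) (one : T) (inv : T -> T) : Prop :=
  (forall a b c, mul a (mul b c) = mul (mul a b) c) /\
  (forall a, mul one a = a /\ mul a one = a) /\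
  (forall a, mul (inv a) a = one /\ mul a (inv a) = one).

Definition is_group_op (mul : T -> T -> T) : Prop :=
  exists one inv, group_laws mul one inv.

Definition skew_brace (dot circ : T -> T -> T) : Prop :=
  is_group_op circ /\
  exists one inv, group_laws dot one inv /\
    forall g h k, circ g (dot h k) = dot (circ g h) (dot (inv g) (circ g k)).

Definition bi_skew_brace (dot circ : T -> T -> T) : Prop :=
  skew_brace dot circ /\ skew_brace circ dot.

Definition brace_block {I : Type} (ops : I -> T -> T -> T) : Prop :=
  (forall i, is_group_op (ops i)) /\
  (forall i j, i <> j -> bi_skew_brace (ops i) (ops j)).

Definition commutator (mul : T -> T -> T) (inv : T -> T) (a b : T) : T :=
  mul (mul (inv a) (inv b)) (mul a b).

Definition nil2 (mul : T -> T -> T) (one : T) (inv : T -> T) : Prop :=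
  forall a b c, commutator mul inv (commutator mul inv a b) c = one.

Inductive comm_subgroup (mul : T -> T -> T) (one : T) (inv : T -> T) : T -> Prop :=
| cs_one : comm_subgroup mul one inv one
| cs_comm a b : comm_subgroup mul one inv (commutator mul inv a b)
| cs_mul a b : comm_subgroup mul one inv a -> comm_subgroup mul one inv b ->
    comm_subgroup mul one inv (mul a b)
| cs_inv a : comm_subgroup mul one inv a -> comm_subgroup mul one inv (inv a).

Definition congr_K mul one inv (g h : T) : Prop :=
  comm_subgroup mul one inv (mul (inv g) h).
End Defs.

Definition is_hom {A B : Type} (mulA : A -> A -> A) (mulB : B -> B -> B)
  (f : A -> B) : Prop := forall a b, f (mulA a b) = mulB (f a) (f b).

Definition free_nil2 {X G : Type} (mul : G -> G -> G) (one : G) (inv : G -> G)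
  (iota : X -> G) : Prop :=
  group_laws mul one inv /\ nil2 mul one inv /\
  forall (H : Type) (mulH : H -> H -> H) (oneH : H) (invH : H -> H),
    group_laws mulH oneH invH -> nil2 mulH oneH invH ->
    forall f : X -> H,
      (exists phi : G -> H, is_hom mul mulH phi /\ forall x, phi (iota x) = f x) /\
      (forall phi1 phi2 : G -> H, is_hom mul mulH phi1 -> is_hom mul mulH phi2 ->
         (forall x, phi1 (iota x) = phi2 (iota x)) -> forall g, phi1 g = phi2 g).

Definition well_order {X : Type} (le : X -> X -> Prop) : Prop :=
  (forall x, le x x) /\
  (forall x y, le x y -> le y x -> x = y) /\
  (forall x y z, le x y -> le y z -> le x z) /\
  (forall x y, le x y \/ le y x) /\
  (forall P : X -> Prop, (exists x, P x) -> exists m, P m /\ forall x, P x -> le m x).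

(* lift : G -> G is a lifting of the endomorphism psi_y of G/K determined by
   psi_y(x0 K) = y K and psi_y(x K) = K for x <> x0; i.e. lift induces a
   well-defined endomorphism of G/K with these values on the generators. *)
Definition lifts_psi {X G : Type} (mul : G -> G -> G) (one : G) (inv : G -> G)
  (iota : X -> G) (x0 y : X) (lift : G -> G) : Prop :=
  (forall g h, congr_K mul one inv g h -> congr_K mul one inv (lift g) (lift h)) /\
  (forall g h, congr_K mul one inv (lift (mul g h)) (mul (lift g) (lift h))) /\
  congr_K mul one inv (lift (iota x0)) (iota y) /\
  (forall x, x <> x0 -> congr_K mul one inv (lift (iota x)) one).

(* In a group of nilpotency class two the commutator subgroup K is central,
   so conjugation by a only depends on aK and any two conjugations commute.
   If lam : G -> G induces an endomorphism of G/K, then g -> (h -> lam(g) h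
   lam(g)^-1) is therefore a homomorphism from (G,.) to Aut(G) that is
   constant on cosets of K and moves every h inside hK; this makes
   g o h = g lam(g) h lam(g)^-1 a group law, and for two such maps lam, mu the
   two twisting actions commute, which is exactly what the skew brace identity
   between o_lam and o_mu needs.  Distinctness is detected in the Heisenberg
   group over F_2, where the images of x0 and y do not commute. *)
From Stdlib Require Import ClassicalEpsilon.
Set Implicit Arguments.

Section ClassTwo.
Variables (G : Type) (mul : G -> G -> G) (one : G) (inv : G -> G).
Hypothesis hg : group_laws mul one inv.
Hypothesis hn : nil2 mul one inv.
Local Infix "·" := mul (at level 40, left associativity).
Local Notation K := (comm_subgroup mul one inv).
Local Notation cong := (congr_K mul one inv).

Lemma mul_assoc a b c : a · (b · c) = a · b · c.
Proof. apply hg. Qed.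
Lemma mul_1l a : one · a = a.
Proof. apply hg. Qed.
Lemma mul_1r a : a · one = a.
Proof. apply hg. Qed.
Lemma mul_Vl a : inv a · a = one.
Proof. apply hg. Qed.
Lemma mul_Vr a : a · inv a = one.
Proof. apply hg. Qed.

Lemma mul_cancel_l a b c : a · b = a · c -> b = c.
Proof.
  intro E. rewrite <- (mul_1l b), <- (mul_1l c), <- (mul_Vl a), <- !mul_assoc, E.
  reflexivity.
Qed.

Lemma inv_unique a b : a · b = one -> b = inv a.
Proof. intro E. apply (@mul_cancel_l a). rewrite E, mul_Vr. reflexivity. Qed.

Lemma inv_involutive a : inv (inv a) = a.
Proof. symmetry. apply inv_unique, mul_Vl. Qed.

Lemma inv_mul a b : inv (a · b) = inv b · inv a.
Proof.
  symmetry. apply inv_unique.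
  rewrite mul_assoc, <- (mul_assoc a b), mul_Vr, mul_1r, mul_Vr. reflexivity.
Qed.

Lemma mul_comm_commutator a b : a · b = b · a · commutator mul inv a b.
Proof.
  unfold commutator.
  rewrite !mul_assoc, <- (mul_assoc b a (inv a)), mul_Vr, mul_1r, mul_Vr, mul_1l.
  reflexivity.
Qed.

Lemma comm_subgroup_central k : K k -> forall c, k · c = c · k.
Proof.
  induction 1 as [| a b | a b _ IHa _ IHb | a _ IHa]; intro c.
  - rewrite mul_1l, mul_1r. reflexivity.
  - pose proof (inv_unique (hn a b c)) as E.
    unfold commutator in E |- *. rewrite inv_mul, !inv_involutive in E. exact E.
  - rewrite <- mul_assoc, IHb, mul_assoc, IHa, mul_assoc. reflexivity.
  - apply (@mul_cancel_l a).
    rewrite !mul_assoc, mul_Vr, mul_1l, IHa, <- mul_assoc, mul_Vr, mul_1r.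
    reflexivity.
Qed.

Lemma congK_mulr g h : cong g h -> exists k, K k /\ h = g · k.
Proof.
  intro H. exists (inv g · h). split; [exact H |].
  rewrite mul_assoc, mul_Vr, mul_1l. reflexivity.
Qed.

Lemma congK_mulK g k : K k -> cong g (g · k).
Proof. intro Kk. unfold congr_K. rewrite mul_assoc, mul_Vl, mul_1l. exact Kk. Qed.

Lemma congK_refl g : cong g g.
Proof. unfold congr_K. rewrite mul_Vl. constructor. Qed.

Lemma congK_sym g h : cong g h -> cong h g.
Proof.
  intro H. unfold congr_K. apply cs_inv in H.
  rewrite inv_mul, inv_involutive in H. exact H.
Qed.

Lemma congK_mul g g' h h' : cong g g' -> cong h h' -> cong (g · h) (g' · h').
Proof.
  intros Hg Hh.
  destruct (congK_mulr Hg) as [k [Kk ->]], (congK_mulr Hh) as [l [Kl ->]].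
  replace (g · k · (h · l)) with (g · h · (k · l)).
  - apply congK_mulK. constructor; assumption.
  - rewrite !mul_assoc, <- (mul_assoc g k h), (comm_subgroup_central Kk h), mul_assoc.
    reflexivity.
Qed.

Definition conj_by a h := a · h · inv a.

Lemma conj_by_mulr a h k : conj_by a (h · k) = conj_by a h · conj_by a k.
Proof.
  unfold conj_by. rewrite !mul_assoc, <- (mul_assoc _ (inv a) a), mul_Vl, mul_1r.
  reflexivity.
Qed.

Lemma conj_by_mull a b h : conj_by (a · b) h = conj_by a (conj_by b h).
Proof. unfold conj_by. rewrite inv_mul, !mul_assoc. reflexivity. Qed.

Lemma conj_by_congK a b h : cong a b -> conj_by a h = conj_by b h.
Proof.
  intro Hab. destruct (congK_mulr Hab) as [k [Kk ->]]. unfold conj_by.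
  rewrite inv_mul, <- (mul_assoc a k h), (comm_subgroup_central Kk h), !mul_assoc,
    <- (mul_assoc _ k), mul_Vr, mul_1r.
  reflexivity.
Qed.

Lemma conj_by_comm a b h : conj_by a (conj_by b h) = conj_by b (conj_by a h).
Proof.
  rewrite <- !conj_by_mull. apply conj_by_congK.
  rewrite (mul_comm_commutator a b). apply congK_sym, congK_mulK. constructor.
Qed.

Lemma conj_by_one a : conj_by a one = one.
Proof. unfold conj_by. rewrite mul_1r, mul_Vr. reflexivity. Qed.

Lemma congK_conj_by a h : cong h (conj_by a h).
Proof.
  unfold congr_K, conj_by.
  replace (inv h · (a · h · inv a)) with (commutator mul inv h (inv a))
    by (unfold commutator; rewrite inv_involutive, !mul_assoc; reflexivity).
  constructor.
Qed.

Definition hom_mod_K (lam : G -> G) : Prop :=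
  (forall g h, cong g h -> cong (lam g) (lam h)) /\
  (forall g h, cong (lam (g · h)) (lam g · lam h)).

Definition lifted_op (lam : G -> G) g h := g · lam g · h · inv (lam g).

Lemma lifted_op_conj lam g h : lifted_op lam g h = g · conj_by (lam g) h.
Proof. unfold lifted_op, conj_by. rewrite !mul_assoc. reflexivity. Qed.

Section Lifting.
Variable lam : G -> G.
Hypothesis hlam : hom_mod_K lam.

Lemma conj_lift_congK g g' h : cong g g' -> conj_by (lam g) h = conj_by (lam g') h.
Proof. intro Hg. apply conj_by_congK, hlam, Hg. Qed.

Lemma conj_lift_mul g g' h : conj_by (lam (g · g')) h = conj_by (lam g) (conj_by (lam g') h).
Proof. rewrite <- conj_by_mull. apply conj_by_congK, hlam. Qed.

Lemma conj_lift_one h : conj_by (lam one) h = h.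
Proof.
  assert (K1 : K (lam one)).
  { pose proof (proj2 hlam one one) as H. unfold congr_K in H.
    rewrite mul_1l, mul_assoc, mul_Vl, mul_1l in H. exact H. }
  unfold conj_by. rewrite (comm_subgroup_central K1 h), <- mul_assoc, mul_Vr, mul_1r.
  reflexivity.
Qed.

Lemma conj_lift_conj a g h : conj_by (lam (conj_by a g)) h = conj_by (lam g) h.
Proof. apply conj_lift_congK, congK_sym, congK_conj_by. Qed.

Lemma conj_lift_twisted a g h k :
  conj_by (lam (g · conj_by a h)) k = conj_by (lam (g · h)) k.
Proof.
  apply conj_lift_congK.
  apply congK_mul; [apply congK_refl | apply congK_sym, congK_conj_by].
Qed.

Lemma lifted_op_group_laws :
  group_laws (lifted_op lam) one (fun g => conj_by (lam (inv g)) (inv g)).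
Proof.
  split; [| split].
  - intros a b c. rewrite !lifted_op_conj, conj_by_mulr, mul_assoc.
    rewrite conj_lift_twisted, conj_lift_mul. reflexivity.
  - intro a. rewrite !lifted_op_conj, conj_lift_one, conj_by_one, mul_1l, mul_1r.
    split; reflexivity.
  - intro a. rewrite !lifted_op_conj. split.
    + rewrite conj_lift_conj, <- conj_by_mulr, mul_Vl. apply conj_by_one.
    + rewrite <- conj_lift_mul, mul_Vr, conj_lift_one, mul_Vr. reflexivity.
Qed.

End Lifting.

Lemma lifted_op_skew_brace lam mu :
  hom_mod_K lam -> hom_mod_K mu -> skew_brace (lifted_op lam) (lifted_op mu).
Proof.
  intros hlam hmu. split.
  - eexists; eexists. exact (lifted_op_group_laws hmu).
  - eexists; eexists. split; [exact (lifted_op_group_laws hlam) |].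
    intros g h k. rewrite !lifted_op_conj.
    (* The lam-inverse of g twists like inv g, so the lam-twists by g and inv g
       cancel once moved past the twist by h; lam- and mu-twists commute. *)
    rewrite (conj_lift_conj hlam), <- conj_by_mulr, mul_assoc, mul_Vl, mul_1l.
    rewrite (conj_lift_twisted hlam), (conj_lift_mul hlam), conj_by_comm,
      <- (conj_lift_mul hlam g (inv g)), mul_Vr, (conj_lift_one hlam), conj_by_comm.
    rewrite conj_by_mulr, mul_assoc. reflexivity.
Qed.

Lemma lifted_op_brace_block (I : Type) (lams : I -> G -> G) :
  (forall i, hom_mod_K (lams i)) -> brace_block (fun i => lifted_op (lams i)).
Proof.
  intro hlams. split.
  - intro i. eexists; eexists. exact (lifted_op_group_laws (hlams i)).
  - intros i j _. split; apply lifted_op_skew_brace; apply hlams.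
Qed.
End ClassTwo.

Lemma hom_inv (A B : Type) (mulA : A -> A -> A) (oneA : A) (invA : A -> A)
  (mulB : B -> B -> B) (oneB : B) (invB : B -> B) (f : A -> B) :
  group_laws mulA oneA invA -> group_laws mulB oneB invB -> is_hom mulA mulB f ->
  forall a, f (invA a) = invB (f a).
Proof.
  intros hA hB hf a.
  assert (f1 : f oneA = oneB).
  { apply (mul_cancel_l hB (f oneA)). rewrite <- hf, (mul_1l hA), (mul_1r hB).
    reflexivity. }
  apply (inv_unique hB). rewrite <- hf, (mul_Vr hA). exact f1.
Qed.

(* (a, b, c) is the unitriangular matrix [[1,a,c],[0,1,b],[0,0,1]] over F_2. *)
Definition heis := (bool * bool * bool)%type.

Definition heis_mul (p q : heis) : heis :=
  let '(a1, b1, c1) := p in let '(a2, b2, c2) := q in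
  (xorb a1 a2, xorb b1 b2, xorb (xorb c1 c2) (andb a1 b2)).

Definition heis_inv (p : heis) : heis :=
  let '(a, b, c) := p in (a, b, xorb c (andb a b)).

Definition heis_one : heis := (false, false, false).

Lemma heis_group_laws : group_laws heis_mul heis_one heis_inv.
Proof.
  split; [| split].
  - intros [[a1 b1] c1] [[a2 b2] c2] [[a3 b3] c3].
    destruct a1, b1, c1, a2, b2, c2, a3, b3, c3; reflexivity.
  - intros [[a b] c]; destruct a, b, c; split; reflexivity.
  - intros [[a b] c]; destruct a, b, c; split; reflexivity.
Qed.

Lemma heis_nil2 : nil2 heis_mul heis_one heis_inv.
Proof.
  intros [[a1 b1] c1] [[a2 b2] c2] [[a3 b3] c3].
  destruct a1, b1, c1, a2, b2, c2, a3, b3, c3; reflexivity.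
Qed.

Section FreeClassTwo.
Variables (X G : Type) (mul : G -> G -> G) (one : G) (inv : G -> G) (iota : X -> G).
Hypothesis hfree : free_nil2 mul one inv iota.

(* Send w and x0 to the two non-commuting generators of the Heisenberg group
   and every other generator to 1. *)
Lemma free_nil2_conj_neq x0 v w : w <> x0 -> v <> w ->
  conj_by mul inv (iota v) (iota x0) <> conj_by mul inv (iota w) (iota x0).
Proof.
  intros Hw Hvw E. destruct hfree as [hg [_ huniv]].
  set (f := fun x => if excluded_middle_informative (x = w) then (false, true, false)
                     else if excluded_middle_informative (x = x0) then (true, false, false)
                     else heis_one).
  destruct (huniv _ _ _ _ heis_group_laws heis_nil2 f) as [[phi [hphi phi_iota]] _].
  apply (f_equal phi) in E. unfold conj_by in E.
  rewrite !hphi, !(hom_inv hg heis_group_laws hphi), !phi_iota in E. unfold f in E.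
  destruct (excluded_middle_informative (w = w)) as [_ | ]; [| congruence].
  destruct (excluded_middle_informative (x0 = w)); [congruence |].
  destruct (excluded_middle_informative (x0 = x0)) as [_ | ]; [| congruence].
  destruct (excluded_middle_informative (v = w)); [congruence |].
  destruct (excluded_middle_informative (v = x0)); discriminate.
Qed.

Lemma free_nil2_conj_inj x0 v w :
  conj_by mul inv (iota v) (iota x0) = conj_by mul inv (iota w) (iota x0) -> v = w.
Proof.
  intro E.
  destruct (excluded_middle_informative (v = w)) as [| Hvw]; [assumption | exfalso].
  destruct (excluded_middle_informative (w = x0)) as [-> |].
  - apply (free_nil2_conj_neq (x0 := x0) (w := v) (v := x0)); auto.
  - apply (free_nil2_conj_neq (x0 := x0) (w := w) (v := v)); auto.
Qed.

End FreeClassTwo.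

Theorem mainTheorem12 (X : Type) (le : X -> X -> Prop) (x0 : X)
  (hwo : well_order le) (hx0 : forall x, le x0 x)
  (G : Type) (mul : G -> G -> G) (one : G) (inv : G -> G) (iota : X -> G)
  (hfree : free_nil2 mul one inv iota)
  (lift : X -> G -> G)
  (hlift : forall y, lifts_psi mul one inv iota x0 y (lift y)) :
  let circ := fun (y : X) (g h : G) => mul (mul (mul g (lift y g)) h) (inv (lift y g)) in
  brace_block circ /\
  (forall y, circ y (iota x0) (iota x0) =
             mul (mul (mul (iota x0) (iota y)) (iota x0)) (inv (iota y))) /\
  (forall y z, y <> z -> circ y <> circ z).
Proof.
  (* The well-order only singles out x0. *)
  intro circ. pose proof hfree as [hg [hn _]].
  assert (hlams : forall y, hom_mod_K mul one inv (lift y))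
    by (intro y; destruct (hlift y) as [? [? _]]; split; assumption).
  assert (circ_x0 : forall y, circ y (iota x0) (iota x0) =
                              mul (mul (mul (iota x0) (iota y)) (iota x0)) (inv (iota y))).
  { intro y. change (lifted_op mul inv (lift y) (iota x0) (iota x0) =
                     mul (mul (mul (iota x0) (iota y)) (iota x0)) (inv (iota y))).
    rewrite (lifted_op_conj hg), (conj_by_congK hg hn _ (proj1 (proj2 (proj2 (hlift y))))).
    unfold conj_by. rewrite !(mul_assoc hg). reflexivity. }
  split; [exact (lifted_op_brace_block hg hn lift hlams) | split; [exact circ_x0 |]].
  intros y z Hyz E. apply Hyz, (free_nil2_conj_inj hfree x0).
  pose proof (circ_x0 y) as Ey. rewrite E, circ_x0 in Ey.
  apply (mul_cancel_l hg (iota x0)). unfold conj_by. rewrite !(mul_assoc hg).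
  symmetry. exact Ey.
Qed.
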